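(* Fix an initial cost $\omega \in \mathbb{R}^n$ and consider, for a step size $\alpha>0$, the sequence $(\omega_k)_{k\ge 0}$ defined below (under the stated tie-breaking convention). Then exactly one of the following holds: (i) $B(\omega)$ is non-empty, and there is $\alpha_{\max}>0$ such that for every $\alpha\in(0,\alpha_{\max})$ there exists $n\in\mathbb{N}$ with $y(\omega_n)\in B(\omega)$ and $y(\omega_k)=y(\omega)$ for all $k<n$; (ii) $B(\omega)$ is empty, and for every $\alpha>0$ we have $y(\omega_k)=y(\omega)$ for all $k\in\mathbb{N}$.
   Context: Let $Y\subset\mathbb{R}^n$ be a finite non-empty set. For $\omega\in\mathbb{R}^n$, $y(\omega)$ denotes a chosen element of $\operatorname{argmin}_{y\in Y}\langle \omega,y\rangle$ (the ''solver''). Let $\ell:\mathbb{R}^n\to\mathbb{R}$ be differentiable and write $g(y)=\nabla \ell(y)$. Given $\omega\in\mathbb{R}^n$ and $\alpha>0$, define $\omega_0=\omega$ and $\omega_{k+1}=\omega_k+\alpha\, g(y(\omega_k))$ for $k\ge 0$ (i.e. $\omega_{k+1}=\omega_k-\alpha\Delta_k$ with the ''Identity update'' $\Delta_k=-g(y(\omega_k))$). Tie-breaking convention: for every $k\ge1$, if $y(\omega_{k-1})$ is a minimizer of $\langle \omega_k,\cdot\rangle$ over $Y$, then $y(\omega_k)=y(\omega_{k-1})$. Define the linearized loss at $y(\omega)$ by $f(y')=\ell(y(\omega))+\langle y'-y(\omega),\, g(y(\omega))\rangle$ for $y'\in Y$, and the set of better solutions $B(\omega)=\{y'\in Y: f(y')<f(y(\omega))\}$.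 *)

From HB Require Import structures.
From mathcomp Require Import all_boot all_order all_algebra.
From mathcomp Require Import all_classical all_reals all_analysis.
Set Implicit Arguments. Unset Strict Implicit. Unset Printing Implicit Defensive.
Import Order.TTheory GRing.Theory Num.Theory.
Import numFieldNormedType.Exports.
Local Open Scope ring_scope.

Definition dotv (R : realType) (n : nat) (u v : 'rV[R]_n) : R :=
  \sum_(i < n) u ord0 i * v ord0 i.

Definition grad (R : realType) (n : nat) (l : 'rV[R]_n -> R) (y : 'rV[R]_n)
  : 'rV[R]_n := \row_(i < n) ('D_(delta_mx 0 i) l y).

Definition is_argmin (R : realType) (n : nat) (Y : seq 'rV[R]_n)
  (w y0 : 'rV[R]_n) : Prop :=
  y0 \in Y /\ forall y', y' \in Y -> dotv w y0 <= dotv w y'.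

(* the cost sequence w_k for step size alpha, driven by the solver outputs
   ysel alpha k = y(w_k): w_0 = w, w_{k+1} = w_k + alpha * g(y(w_k)) *)
Fixpoint omega_seq (R : realType) (n : nat) (l : 'rV[R]_n -> R)
  (ysel : R -> nat -> 'rV[R]_n) (w : 'rV[R]_n) (alpha : R) (k : nat)
  : 'rV[R]_n :=
  match k with
  | 0%N => w
  | k'.+1 => omega_seq l ysel w alpha k' + alpha *: grad l (ysel alpha k')
  end.

Definition lin_loss (R : realType) (n : nat) (l : 'rV[R]_n -> R)
  (y0 y' : 'rV[R]_n) : R :=
  l y0 + dotv (y' - y0) (grad l y0).

(* membership in the set of better solutions B(w), where y0 = y(w) *)
Definition in_better (R : realType) (n : nat) (Y : seq 'rV[R]_n)
  (l : 'rV[R]_n -> R) (y0 y' : 'rV[R]_n) : Prop :=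
  y' \in Y /\ lin_loss l y0 y' < lin_loss l y0 y0.

(** While the solver keeps returning [y0 = y(w)], the costs drift linearly,
    [w_k = w + k alpha g] with [g = grad l y0]. If no [y'] is better for the
    linearized loss, [y0] stays a minimizer of every [w_k] and the tie-breaking
    rule keeps it forever. If some [y'] has [<g, y'> < <g, y0>], the gap
    [<w_k, y0> - <w_k, y'>] grows linearly in [k], so the solver must leave [y0];
    at the first step [m+1] where it does, [y0] still minimizes [w_m] but not
    [w_m + alpha g], which forces [<g, y_(m+1)> < <g, y0>]. This holds for every
    [alpha > 0], so any [alpha_max] works. *)
From HB Require Import structures.
From mathcomp Require Import all_boot all_order all_algebra.
From mathcomp Require Import all_classical all_reals all_analysis.
From mathcomp Require Import lra.
Import Order.TTheory GRing.Theory Num.Theory.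
Import numFieldNormedType.Exports.

Set Implicit Arguments.
Unset Strict Implicit.
Unset Printing Implicit Defensive.

Local Open Scope ring_scope.

Section InnerProduct.
Variables (R : realType) (n : nat).
Implicit Types u v x : 'rV[R]_n.

Lemma dotvC u v : dotv u v = dotv v u.
Proof. by rewrite /dotv; apply: eq_bigr => i _; rewrite mulrC. Qed.

Lemma dotvDl u v x : dotv (u + v) x = dotv u x + dotv v x.
Proof. by rewrite /dotv -big_split; apply: eq_bigr => i _; rewrite mxE mulrDl. Qed.

Lemma dotvZl (a : R) u x : dotv (a *: u) x = a * dotv u x.
Proof. by rewrite /dotv mulr_sumr; apply: eq_bigr => i _; rewrite mxE mulrA. Qed.

Lemma dotvNl u x : dotv (- u) x = - dotv u x.
Proof. by rewrite -scaleN1r dotvZl mulN1r. Qed.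

Lemma lin_loss_ltE (l : 'rV[R]_n -> R) y0 y' :
  (lin_loss l y0 y' < lin_loss l y0 y0) =
  (dotv (grad l y0) y' < dotv (grad l y0) y0).
Proof.
rewrite /lin_loss subrr -(scale0r 0) dotvZl mul0r addr0 gtrDl dotvDl dotvNl.
by rewrite (dotvC y') (dotvC y0) subr_lt0.
Qed.

Lemma no_better_min_grad (Y : seq 'rV[R]_n) (l : 'rV[R]_n -> R) y0 :
  ~ (exists y', in_better Y l y0 y') ->
  forall y', y' \in Y -> dotv (grad l y0) y0 <= dotv (grad l y0) y'.
Proof.
move=> no_better y' y'Y; rewrite leNgt -lin_loss_ltE.
by apply/negP => better; apply: no_better; exists y'.
Qed.

Lemma argmin_lt_not_argmin (Y : seq 'rV[R]_n) w y1 y2 :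
  is_argmin Y w y1 -> y2 \in Y -> ~ is_argmin Y w y2 -> dotv w y1 < dotv w y2.
Proof.
move=> [_ min_y1] y2Y; apply: contra_notT; rewrite -leNgt => le21.
by split=> // y' y'Y; exact: le_trans le21 (min_y1 _ y'Y).
Qed.

Lemma argmin_shift_lt (Y : seq 'rV[R]_n) w g y0 y1 (alpha : R) :
  0 < alpha -> is_argmin Y w y0 -> y1 \in Y ->
  dotv (w + alpha *: g) y1 < dotv (w + alpha *: g) y0 -> dotv g y1 < dotv g y0.
Proof.
move=> alpha_gt0 [_ min_y0] y1Y; rewrite !dotvDl !dotvZl => lt10.
have := min_y0 _ y1Y; rewrite -(ltr_pM2l alpha_gt0); lra.
Qed.

Lemma argmin_shift_ge0 (Y : seq 'rV[R]_n) w g y0 (c : R) :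
  0 <= c -> is_argmin Y w y0 -> (forall y', y' \in Y -> dotv g y0 <= dotv g y') ->
  is_argmin Y (w + c *: g) y0.
Proof.
move=> c_ge0 [y0Y min_y0] min_g; split=> // y' y'Y.
by rewrite !dotvDl !dotvZl lerD ?min_y0 ?ler_wpM2l ?min_g.
Qed.

Lemma not_argmin_drift (Y : seq 'rV[R]_n) w g y0 y' (alpha : R) :
  0 < alpha -> y' \in Y -> dotv g y' < dotv g y0 ->
  ~ (forall k : nat, is_argmin Y (w + (k%:R * alpha) *: g) y0).
Proof.
move=> alpha_gt0 y'Y lt_g min_all.
pose e := alpha * (dotv g y0 - dotv g y').
have e_gt0 : 0 < e by rewrite mulr_gt0 // subr_gt0.
pose M := dotv w y' - dotv w y0.
have le_Me k : k%:R * e <= M.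
  by have [_ /(_ y' y'Y)] := min_all k; rewrite !dotvDl !dotvZl /e /M; nra.
pose k := Num.bound `|M / e|.
have : M / e < k%:R.
  by apply: le_lt_trans (archi_boundP (normr_ge0 _)); exact: ler_norm.
by rewrite ltr_pdivrMr // ltNge le_Me.
Qed.

End InnerProduct.

Section Iteration.
Variables (R : realType) (n : nat) (Y : seq 'rV[R]_n) (l : 'rV[R]_n -> R).
Variables (w y0 : 'rV[R]_n) (ysel : R -> nat -> 'rV[R]_n) (alpha : R).
Hypothesis alpha_gt0 : 0 < alpha.
Hypothesis ysel0 : ysel alpha 0%N = y0.
Hypothesis ysel_argmin :
  forall k, is_argmin Y (omega_seq l ysel w alpha k) (ysel alpha k).
Hypothesis ysel_tie : forall k,
  is_argmin Y (omega_seq l ysel w alpha k.+1) (ysel alpha k) ->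
  ysel alpha k.+1 = ysel alpha k.

Local Notation omega := (omega_seq l ysel w alpha).
Local Notation g := (grad l y0).

Lemma argmin_omega0 : is_argmin Y w y0.
Proof. by rewrite -ysel0; exact: ysel_argmin 0%N. Qed.

Lemma omega_seq_stay k : (forall j, (j < k)%N -> ysel alpha j = y0) ->
  omega k = w + (k%:R * alpha) *: g.
Proof.
elim: k => [|k IH] stay /=; first by rewrite mul0r scale0r addr0.
rewrite IH => [|j /ltnW]; last exact: stay.
by rewrite stay // -addrA -scalerDl mulrSr mulrDl mul1r.
Qed.

Lemma ysel_stationary : (forall y', y' \in Y -> dotv g y0 <= dotv g y') ->
  forall k, ysel alpha k = y0.
Proof.
move=> min_g; elim/ltn_ind=> -[//|k] IH.
rewrite ysel_tie IH // omega_seq_stay //.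
by apply: argmin_shift_ge0 argmin_omega0 min_g; rewrite mulr_ge0 // ltW.
Qed.

Lemma ysel_leaves_y0 y' : y' \in Y -> dotv g y' < dotv g y0 ->
  exists m, ysel alpha m != y0.
Proof.
move=> y'Y lt_g.
have drift := not_argmin_drift (w := w) alpha_gt0 y'Y lt_g.
apply: (contra_notP _ drift) => never_leaves k.
have stay j : ysel alpha j = y0.
  by apply/eqP/negPn/negP => leaves; apply: never_leaves; exists j.
have := ysel_argmin k; rewrite stay omega_seq_stay // => j _; exact: stay.
Qed.

Lemma ysel_first_exit_better m :
  (forall k, (k < m.+1)%N -> ysel alpha k = y0) -> ysel alpha m.+1 != y0 ->
  dotv g (ysel alpha m.+1) < dotv g y0.
Proof.
move=> stay exits.
have [y1Y _] := ysel_argmin m.+1.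
have min_m : is_argmin Y (omega m) y0 by rewrite -(stay m).
apply: (argmin_shift_lt alpha_gt0 min_m y1Y).
have -> : omega m + alpha *: g = omega m.+1 by rewrite /= stay.
apply: argmin_lt_not_argmin (ysel_argmin m.+1) (proj1 argmin_omega0) _.
by move=> min0; move: exits; rewrite ysel_tie ?stay ?eqxx.
Qed.

Lemma ysel_reaches_better y' : in_better Y l y0 y' ->
  exists m, in_better Y l y0 (ysel alpha m) /\
    forall k, (k < m)%N -> ysel alpha k = y0.
Proof.
case=> y'Y; rewrite lin_loss_ltE => lt_g.
have [m exits first] := ex_minnP (ysel_leaves_y0 y'Y lt_g).
have stay k : (k < m)%N -> ysel alpha k = y0.
  by move=> ltkm; apply/eqP; apply: contraTT ltkm => /first; rewrite -leqNgt.
exists m; split=> //.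
case: m exits {first} stay => [|m] exits stay; first by rewrite ysel0 eqxx in exits.
split; first by case: (ysel_argmin m.+1).
by rewrite lin_loss_ltE; exact: ysel_first_exit_better.
Qed.

End Iteration.

Theorem theorem1 (R : realType) (n : nat) (Y : seq 'rV[R]_n)
  (l : 'rV[R]_n -> R) (w y0 : 'rV[R]_n) (ysel : R -> nat -> 'rV[R]_n) :
  Y != [::] ->
  (forall y : 'rV[R]_n, differentiable l y) ->
  is_argmin Y w y0 ->
  (forall alpha : R, 0 < alpha -> ysel alpha 0%N = y0) ->
  (forall (alpha : R) (k : nat), 0 < alpha ->
     is_argmin Y (omega_seq l ysel w alpha k) (ysel alpha k)) ->
  (forall (alpha : R) (k : nat), 0 < alpha ->
     is_argmin Y (omega_seq l ysel w alpha k.+1) (ysel alpha k) ->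
     ysel alpha k.+1 = ysel alpha k) ->
  let P1 :=
    (exists y', in_better Y l y0 y') /\
    (exists amax : R, 0 < amax /\
       forall alpha : R, 0 < alpha -> alpha < amax ->
         exists m : nat, in_better Y l y0 (ysel alpha m) /\
           forall k : nat, (k < m)%N -> ysel alpha k = y0) in
  let P2 :=
    (~ exists y', in_better Y l y0 y') /\
    (forall alpha : R, 0 < alpha -> forall k : nat, ysel alpha k = y0) in
  (P1 /\ ~ P2) \/ (P2 /\ ~ P1).
Proof.
move=> _ _ _ ysel0 ysel_argmin ysel_tie P1 P2.
have [[y' better]|no_better] := pselect (exists y', in_better Y l y0 y').
- left; split; last by case=> no_better; case: no_better; exists y'.
  split; first by exists y'.
  exists 1; split=> // alpha alpha_gt0 _.
  exact: (ysel_reaches_better alpha_gt0 (ysel0 _ alpha_gt0)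
           (ysel_argmin alpha ^~ alpha_gt0) (ysel_tie alpha ^~ alpha_gt0) better).
- right; split; last by case.
  split=> // alpha alpha_gt0.
  exact: (ysel_stationary alpha_gt0 (ysel0 _ alpha_gt0)
           (ysel_argmin alpha ^~ alpha_gt0) (ysel_tie alpha ^~ alpha_gt0)
           (no_better_min_grad no_better)).
Qed.
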